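(* Let $A\in\mathbb{R}^{m\times n}$ have nonzero rows $a_1^T,\dots,a_m^T$, let $b\in\mathcal{R}(A)$ and $\lambda>0$, and let $\hat x$ be the unique solution of \[ \min_{x\in\mathbb{R}^n}\ \lambda\|x\|_1+\tfrac12\|x\|_2^2\quad\text{subject to}\quad Ax=b . \] Let $p_1,\dots,p_m>0$ with $\sum_i p_i=1$. Then both the Randomized Sparse Kaczmarz method (RSK) and the Exact-Step Randomized Sparse Kaczmarz method (ERSK) described in the context converge in expectation to $\hat x$ at a linear rate: for each of the two methods there exist $q\in(0,1)$ and $c>0$ such that \[ \mathbb{E}\left[\|x_k-\hat x\|_2\right]\le c\cdot q^{k/2}\quad\text{for all }k. \]
   Context: $S_\lambda$ is componentwise soft shrinkage: $S_\lambda(x)_j=\max\{|x_j|-\lambda,0\}\operatorname{sign}(x_j)$. Let $f(x)=\lambda\|x\|_1+\frac12\|x\|_2^2$ and $f^*(x^* )=\sup_x\langle x^*,x\rangle-f(x)$ its convex conjugate (so $\nabla f^*=S_\lambda$). Both methods start with $x_0=x_0^*=0$ and at each step $k$ choose $i_k\in\{1,\dots,m\}$ independently at random with $P(i_k=i)=p_i$. RSK: $x_{k+1}^*=x_k^*-\frac{\langle a_{i_k},x_k\rangle-b_{i_k}}{\|a_{i_k}\|_2^2}\,a_{i_k}$, $x_{k+1}=S_\lambda(x_{k+1}^* )$. ERSK: let $t_k$ be a minimizer of $t\mapsto f^*(x_k^*-t\,a_{i_k})+t\,b_{i_k}$ over $t\in\mathbb{R}$, and set $x_{k+1}^*=x_k^*-t_ka_{i_k}$,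 $x_{k+1}=S_\lambda(x_{k+1}^* )$. Expectations are over the random indices. *)

From HB Require Import structures.
From mathcomp Require Import all_boot all_order all_algebra.
From mathcomp Require Import boolp classical_sets reals.
Set Implicit Arguments. Unset Strict Implicit. Unset Printing Implicit Defensive.
Import Order.TTheory GRing.Theory Num.Theory.
Local Open Scope ring_scope.
Local Open Scope classical_set_scope.

Section Defs.
Variables (R : realType) (m n : nat).

Definition dotv (u v : 'cV[R]_n) : R := \sum_(j < n) u j 0 * v j 0.
Definition norm2 (u : 'cV[R]_n) : R := Num.sqrt (dotv u u).
Definition norm1 (u : 'cV[R]_n) : R := \sum_(j < n) `|u j 0|.

Definition soft (lam : R) (z : 'cV[R]_n) : 'cV[R]_n :=
  \col_j (Num.sg (z j 0) * Num.max (`|z j 0| - lam) 0).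

Definition fobj (lam : R) (x : 'cV[R]_n) : R :=
  lam * norm1 x + 2^-1 * (norm2 x) ^+ 2.

Definition fconj (lam : R) (y : 'cV[R]_n) : R :=
  sup (range (fun x : 'cV[R]_n => dotv y x - fobj lam x)).

Definition arow (A : 'M[R]_(m, n)) (i : 'I_m) : 'cV[R]_n := (row i A)^T.

(* RSK: dual iterate x*_k after index sequence [:: i_0; ...; i_{k-1}] *)
Definition rsk_dual (lam : R) (A : 'M[R]_(m, n)) (b : 'cV[R]_m)
    (s : seq 'I_m) : 'cV[R]_n :=
  foldl (fun z i =>
     z - ((dotv (arow A i) (soft lam z) - b i 0) / dotv (arow A i) (arow A i))
           *: arow A i) 0 s.

Definition rsk_iter lam A b s := soft lam (rsk_dual lam A b s).

(* ERSK: the step size is chosen by a rule T k z i (iteration k, current dual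
   iterate z = x*_k, chosen index i), which must return a minimizer of
   t |-> f^*(z - t a_i) + t b_i. *)
Definition ersk_rule_ok (lam : R) (A : 'M[R]_(m, n)) (b : 'cV[R]_m)
    (T : nat -> 'cV[R]_n -> 'I_m -> R) : Prop :=
  forall k z i t,
    fconj lam (z - T k z i *: arow A i) + T k z i * b i 0
      <= fconj lam (z - t *: arow A i) + t * b i 0.

Definition ersk_dual (A : 'M[R]_(m, n)) (T : nat -> 'cV[R]_n -> 'I_m -> R)
    (s : seq 'I_m) : 'cV[R]_n :=
  (foldl (fun (st : nat * 'cV[R]_n) i =>
            (st.1.+1, st.2 - T st.1 st.2 i *: arow A i)) (0%N, 0) s).2.

Definition ersk_iter lam A T s := soft lam (ersk_dual A T s).

(* expectation over i.i.d. indices i_0..i_{k-1} with P(i_j = i) = p i *)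
Definition expect (p : 'I_m -> R) (k : nat) (g : seq 'I_m -> R) : R :=
  \sum_(s : k.-tuple 'I_m) (\prod_(i <- s) p i) * g s.

End Defs.

(* Track the dual iterate [z = x*_k] through the Bregman distance
   [D(z) = f(xhat) + f^*(z) - <z, xhat>], which dominates [|S_lam z - xhat|^2 / 2]
   since [S_lam z] is the gradient of [f^*] at [z].  An RSK step decreases [D] by at
   least [r_i^2 / (2 |a_i|^2)] with [r_i = <a_i, x_k> - b_i], and the exact step of ERSK
   minimises [D] along the same line, so it does at least as well.  Both methods keep
   [z] orthogonal to [ker A], and there [D(z) <= g |A x_k - b|^2]: this comes from a
   Hoffman-type bound [|e|^2 <= C |A e|^2] for the vectors [e] to which no nonzero
   kernel vector is sign-conformal, because the optimality of [xhat] excludes such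
   kernel vectors for [e = x_k - xhat].  Hence [E D(x*_(k+1)) <= q E D(x*_k)], and
   Jensen's inequality for the square root turns this into the rate for
   [E |x_k - xhat|]. *)

From HB Require Import structures.
From mathcomp Require Import all_boot all_order all_algebra.
From mathcomp Require Import boolp classical_sets reals.
From mathcomp Require Import ring lra.
Import Order.TTheory GRing.Theory Num.Theory.
Local Open Scope ring_scope.
Set Implicit Arguments. Unset Strict Implicit. Unset Printing Implicit Defensive.

(* Order hypotheses produced by case lemmas such as [ltrP] are stated through
   a structure instance that [lra] does not parse; restating them fixes this. *)
Ltac restate_order_hyps := repeat match goal with
  | H : is_true (@Order.lt _ _ ?a ?b) |- _ => have := (H : a < b); clear H
  | H : is_true (@Order.le _ _ ?a ?b) |- _ => have := (H : a <= b); clear H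
  end; intros.
Ltac olra := restate_order_hyps; lra.
Ltac onra := restate_order_hyps; nra.
Ltac case_norms := repeat match goal with
  | |- context [ Num.norm ?x ] => let h := fresh "hx" in
      have [h|h] := lerP 0 x; [rewrite (ger0_norm h) | rewrite (ltr0_norm h)]
  | H : context [ Num.norm ?x ] |- _ => let h := fresh "hx" in
      have [h|h] := lerP 0 x; [rewrite (ger0_norm h) in H | rewrite (ltr0_norm h) in H]
  end.

Section Shrink.
Variables (R : realType) (lam : R).
Hypothesis lam_gt0 : 0 < lam.

Definition shrink (w : R) : R := Num.sg w * Num.max (`|w| - lam) 0.

Definition phi (t : R) : R := lam * `|t| + t ^+ 2 / 2.

Lemma shrink_cases w :
  [\/ lam < w /\ shrink w = w - lam, w < - lam /\ shrink w = w + lam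
    | - lam <= w <= lam /\ shrink w = 0].
Proof.
rewrite /shrink; have [hw|hw] := ltrP lam w.
  apply: Or31; split=> //.
  by rewrite gtr0_sg ?gtr0_norm ?mul1r ?max_l //; olra.
have [hw'|hw'] := ltrP w (- lam).
  apply: Or32; split=> //.
  by rewrite ltr0_sg ?ltr0_norm ?mulN1r ?max_l; first ring; olra.
have hw'' : - lam <= w <= lam by rewrite hw hw'.
by apply: Or33; split=> //; rewrite max_r ?mulr0 // subr_le0 ler_norml.
Qed.

Lemma shrink_residual_norm w : `|w - shrink w| <= lam.
Proof.
case: (shrink_cases w) => [[h ->]|[h ->]|[/andP[h1 h2] ->]].
- by rewrite opprB addrC subrK ger0_norm; olra.
- by rewrite opprD addrA subrr add0r normrN gtr0_norm.
- by rewrite subr0 ler_norml h1 h2.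
Qed.

(* [w - shrink w] is a subgradient of [lam |.|] at [shrink w]. *)
Lemma shrink_mul_residual w : shrink w * (w - shrink w) = lam * `|shrink w|.
Proof.
case: (shrink_cases w) => [[h ->]|[h ->]|[_ ->]].
- by rewrite gtr0_norm; [ring|olra].
- by rewrite ltr0_norm; [ring|olra].
- by rewrite mul0r normr0 mulr0.
Qed.

Lemma mul_shrink_residual_le w t : t * (w - shrink w) <= lam * `|t|.
Proof.
apply: le_trans (ler_norm _) _; rewrite normrM mulrC.
exact: ler_wpM2r (shrink_residual_norm w).
Qed.

Lemma phi_shrink_min u w :
  phi (shrink w) - w * shrink w + (u - shrink w) ^+ 2 / 2 <= phi u - w * u.
Proof.
have h1 := mul_shrink_residual_le w u; have h2 := shrink_mul_residual w.
set s := shrink w in h1 h2 *; rewrite -subr_ge0.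
suff -> : phi u - w * u - (phi s - w * s + (u - s) ^+ 2 / 2)
          = lam * `|u| - u * (w - s) by rewrite subr_ge0.
by rewrite /phi -h2; field.
Qed.

Lemma phi_bregman_le a w :
  phi a - phi (shrink w) - w * (a - shrink w)
    <= (2^-1 + 2 * lam / `|a|) * (shrink w - a) ^+ 2.
Proof.
have -> : phi a - phi (shrink w) - w * (a - shrink w)
   = (lam * `|a| - a * (w - shrink w)) + (shrink w - a) ^+ 2 / 2.
  by rewrite /phi -shrink_mul_residual; field.
rewrite mulrDl addrC; apply: lerD; first by rewrite mulrC.
have [->|a_neq0] := eqVneq a 0.
  by rewrite normr0 invr0 !(mulr0, mul0r) subrr.
have a_gt0 : 0 < `|a| by rewrite normr_gt0.
rewrite -mulrA mulrAC -(ler_pM2r a_gt0) -!mulrA mulVf ?mulr1 ?gt_eqF //.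
case: (shrink_cases w) => [[h ->]|[h ->]|[/andP[h1 h2] ->]].
- have -> : w - (w - lam) = lam by ring.
  have [ha|ha] := lerP 0 a.
    rewrite ger0_norm // (mulrC a lam) subrr mul0r.
    by have := mulr_ge0 (sqr_ge0 (w - lam - a)) (ltW lam_gt0); onra.
  rewrite ltr0_norm //.
  have : a ^+ 2 <= (w - lam - a) ^+ 2 by onra.
  onra.
- have -> : w - (w + lam) = - lam by ring.
  have [ha|ha] := lerP 0 a.
    rewrite ger0_norm //.
    have : a ^+ 2 <= (w + lam - a) ^+ 2 by onra.
    onra.
  rewrite ltr0_norm //.
  by have := mulr_ge0 (sqr_ge0 (w + lam - a)) (ltW lam_gt0); onra.
- by rewrite !subr0; case_norms; onra.
Qed.

(* Shifting [a] towards [c] and [c] towards [a] by the same amount [d], with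
   [|d| <= |c - a|], cannot increase [|a| + |c|]. *)
Lemma phi_exchange_le a c d : 0 <= d * (c - a) -> d ^+ 2 <= d * (c - a) ->
  phi (a + d) - phi a + (phi (c - d) - phi c) <= - (d * (c - a)) + d ^+ 2.
Proof.
move=> h1 h2.
suff hl1 : `|a + d| + `|c - d| <= `|a| + `|c|.
  rewrite -subr_ge0.
  have -> : - (d * (c - a)) + d ^+ 2 - (phi (a + d) - phi a + (phi (c - d) - phi c))
      = lam * (`|a| + `|c| - (`|a + d| + `|c - d|)) by rewrite /phi; field.
  by rewrite mulr_ge0 ?subr_ge0 // ltW.
case: (ltrgt0P d) => hd.
- have : d <= c - a by rewrite -(ler_pM2l hd) -expr2.
  by clear -hd; case_norms; olra.
- have nd : 0 < - d by rewrite oppr_gt0.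
  have : c - a <= d by rewrite -(ler_pM2l nd) !mulNr lerN2 -expr2.
  by clear -hd; case_norms; olra.
- by rewrite hd addr0 subr0.
Qed.

End Shrink.

Section Dot.
Variables (R : realType) (n : nat).
Implicit Types u v w : 'cV[R]_n.

Lemma dotvC u v : dotv u v = dotv v u.
Proof. by apply: eq_bigr => j _; rewrite mulrC. Qed.

Lemma dotvDl u v w : dotv (u + v) w = dotv u w + dotv v w.
Proof. by rewrite /dotv -big_split; apply: eq_bigr => j _; rewrite !mxE mulrDl. Qed.

Lemma dotvNl u w : dotv (- u) w = - dotv u w.
Proof. by rewrite /dotv -sumrN; apply: eq_bigr => j _; rewrite !mxE mulNr. Qed.

Lemma dotvBl u v w : dotv (u - v) w = dotv u w - dotv v w.
Proof. by rewrite dotvDl dotvNl. Qed.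

Lemma dotvZl (a : R) u w : dotv (a *: u) w = a * dotv u w.
Proof. by rewrite /dotv mulr_sumr; apply: eq_bigr => j _; rewrite !mxE mulrA. Qed.

Lemma dotvDr u v w : dotv w (u + v) = dotv w u + dotv w v.
Proof. by rewrite dotvC dotvDl !(dotvC w). Qed.

Lemma dotvNr u w : dotv w (- u) = - dotv w u.
Proof. by rewrite dotvC dotvNl dotvC. Qed.

Lemma dotvBr u v w : dotv w (u - v) = dotv w u - dotv w v.
Proof. by rewrite dotvDr dotvNr. Qed.

Lemma dotvZr (a : R) u w : dotv w (a *: u) = a * dotv w u.
Proof. by rewrite dotvC dotvZl dotvC. Qed.

Lemma dotv0r w : dotv w 0 = 0.
Proof. by rewrite /dotv big1 // => j _; rewrite mxE mulr0. Qed.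

Lemma dotv_sqr u : dotv u u = \sum_j u j 0 ^+ 2.
Proof. by apply: eq_bigr => j _; rewrite expr2. Qed.

Lemma dotv_ge0 u : 0 <= dotv u u.
Proof. by rewrite dotv_sqr sumr_ge0 // => j _; apply: sqr_ge0. Qed.

Lemma dotv_eq0 u : (dotv u u == 0) = (u == 0).
Proof.
apply/eqP/eqP => [|->]; last exact: dotv0r.
rewrite dotv_sqr => /eqP; rewrite psumr_eq0 => [/allP u0|j _]; last exact: sqr_ge0.
apply/matrixP => j k; rewrite (ord1 k) mxE.
by apply/eqP; rewrite -sqrf_eq0; apply: u0; rewrite mem_index_enum.
Qed.

Lemma dotv_convex (s : R) u v : 0 <= s <= 1 ->
  dotv (s *: u + (1 - s) *: v) (s *: u + (1 - s) *: v)
    <= s * dotv u u + (1 - s) * dotv v v.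
Proof.
case/andP=> s0 s1; rewrite !dotv_sqr !mulr_sumr -big_split; apply: ler_sum => j _ /=.
have s1' : 0 <= 1 - s by rewrite subr_ge0.
by rewrite !mxE; have := mulr_ge0 (mulr_ge0 s0 s1') (sqr_ge0 (u j 0 - v j 0)); nra.
Qed.

End Dot.

Section Bregman.
Variables (R : realType) (n : nat) (lam : R).
Hypothesis lam_gt0 : 0 < lam.
Implicit Types u x xh z d : 'cV[R]_n.

Lemma fobjE x : fobj lam x = \sum_j phi lam (x j 0).
Proof.
rewrite /fobj /norm2 sqr_sqrtr ?dotv_ge0 // /norm1 /dotv !mulr_sumr -big_split.
by apply: eq_bigr => j _; rewrite /phi /=; ring.
Qed.

Lemma fobj_soft_min u z :
  fobj lam (soft lam z) - dotv z (soft lam z) + dotv (soft lam z - u) (soft lam z - u) / 2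
    <= fobj lam u - dotv z u.
Proof.
rewrite !fobjE /dotv mulr_suml -!sumrB -big_split; apply: ler_sum => j _ /=.
rewrite !mxE -/(shrink lam (z j 0)).
by have := phi_shrink_min lam_gt0 (u j 0) (z j 0); lra.
Qed.

Lemma fconj_soft z : fconj lam z = dotv z (soft lam z) - fobj lam (soft lam z).
Proof.
have soft_max u : dotv z u - fobj lam u <= dotv z (soft lam z) - fobj lam (soft lam z).
  by have := fobj_soft_min u z; have := dotv_ge0 (soft lam z - u); lra.
apply/eqP; rewrite eq_le; apply/andP; split.
  apply: ge_sup => [|_ [u _ <-]]; last exact: soft_max.
  by exists (dotv z 0 - fobj lam (0 : 'cV_n)), 0.
apply: ub_le_sup; last by exists (soft lam z).
by exists (dotv z (soft lam z) - fobj lam (soft lam z)) => _ [u _ <-]; exact: soft_max.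
Qed.

(* The Bregman distance of [f] between [xh] and [soft lam z], taken with
   respect to the subgradient [z] of [f] at [soft lam z]. *)
Definition bregman xh z : R :=
  fobj lam xh - fobj lam (soft lam z) - dotv z (xh - soft lam z).

Lemma bregman_fconj xh z : bregman xh z = fobj lam xh + fconj lam z - dotv z xh.
Proof. by rewrite fconj_soft /bregman dotvBr; ring. Qed.

Lemma bregmanE xh z : bregman xh z =
  \sum_j (phi lam (xh j 0) - phi lam (shrink lam (z j 0))
          - z j 0 * (xh j 0 - shrink lam (z j 0))).
Proof.
rewrite /bregman !fobjE /dotv -!sumrB; apply: eq_bigr => j _.
by rewrite !mxE.
Qed.

Lemma sqr_norm2_le_bregman xh z :
  dotv (soft lam z - xh) (soft lam z - xh) / 2 <= bregman xh z.
Proof. by rewrite /bregman [dotv z _]dotvBr; have := fobj_soft_min xh z; lra. Qed.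

Lemma bregman_ge0 xh z : 0 <= bregman xh z.
Proof. by apply: le_trans (sqr_norm2_le_bregman xh z); rewrite divr_ge0 ?dotv_ge0. Qed.

Lemma bregmanD_le xh z d :
  bregman xh (z + d) <= bregman xh z + dotv (soft lam z - xh) d + dotv d d / 2.
Proof.
rewrite !bregmanE /dotv mulr_suml -!big_split; apply: ler_sum => j _ /=.
rewrite !mxE -/(shrink lam (z j 0)).
have := phi_shrink_min lam_gt0 (shrink lam (z j 0 + d j 0)) (z j 0).
by have := sqr_ge0 (shrink lam (z j 0 + d j 0) - shrink lam (z j 0) - d j 0); lra.
Qed.

Lemma bregman_le xh z :
  bregman xh z <= (2^-1 + \sum_j 2 * lam / `|xh j 0|)
                  * dotv (soft lam z - xh) (soft lam z - xh).
Proof.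
rewrite bregmanE /dotv mulr_sumr; apply: ler_sum => j _; rewrite !mxE -expr2.
apply: le_trans (phi_bregman_le lam_gt0 (xh j 0) (z j 0)) _.
rewrite ler_wpM2r ?sqr_ge0 // lerD2l (bigD1 j) //= lerDl.
by apply: sumr_ge0 => i _; rewrite divr_ge0 ?mulr_ge0 // ltW.
Qed.

Lemma norm2_le_bregman xh z :
  norm2 (soft lam z - xh) <= Num.sqrt 2 * Num.sqrt (bregman xh z).
Proof.
rewrite /norm2 -sqrtrM // ler_sqrt ?mulr_ge0 ?bregman_ge0 //.
by have := sqr_norm2_le_bregman xh z; lra.
Qed.

Lemma fobj_exchange_le (a c d : 'cV[R]_n) :
  (forall j, 0 <= d j 0 * (c j 0 - a j 0)) ->
  (forall j, d j 0 ^+ 2 <= d j 0 * (c j 0 - a j 0)) ->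
  fobj lam (a + d) - fobj lam a + (fobj lam (c - d) - fobj lam c)
    <= dotv d d - dotv d (c - a).
Proof.
move=> dca d2; rewrite !fobjE /dotv -!sumrB -big_split; apply: ler_sum => j _ /=.
rewrite !mxE; have := phi_exchange_le lam_gt0 (dca j) (d2 j); lra.
Qed.

End Bregman.

Section Matrix.
Variable R : realType.

Lemma dotv_mulmx p q (M : 'M[R]_(p, q)) (u : 'cV_p) (v : 'cV_q) :
  dotv u (M *m v) = dotv (M^T *m u) v.
Proof.
rewrite /dotv.
under eq_bigr => i _ do rewrite mxE mulr_sumr.
under [RHS]eq_bigr => j _ do rewrite mxE mulr_suml.
rewrite exchange_big /=; apply: eq_bigr => j _; apply: eq_bigr => i _.
by rewrite mxE; ring.
Qed.

Lemma sqr_sum_le q (c : 'I_q -> R) : (\sum_j c j) ^+ 2 <= q%:R * \sum_j c j ^+ 2.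
Proof.
set S := \sum_j c j ^+ 2.
have h j : c j * \sum_k c k <= q%:R * (c j ^+ 2 / 2) + S / 2.
  rewrite mulr_sumr.
  have -> : q%:R * (c j ^+ 2 / 2) + S / 2 = \sum_k (c j ^+ 2 / 2 + c k ^+ 2 / 2).
    by rewrite big_split /= sumr_const card_ord mulr_natl /S mulr_suml.
  by apply: ler_sum => k _; have := sqr_ge0 (c j - c k); lra.
rewrite expr2 mulr_suml; apply: le_trans (ler_sum _ (fun j _ => h j)) _.
rewrite big_split /= sumr_const card_ord -mulr_sumr -mulr_suml -/S -mulr_natl.
lra.
Qed.

Lemma dotv_mulmx_le p q (M : 'M[R]_(p, q)) : exists K, 0 <= K /\
  forall w : 'cV_q, dotv (M *m w) (M *m w) <= K * dotv w w.
Proof.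
set K := q%:R * \sum_i \sum_j M i j ^+ 2.
have K0 : 0 <= K.
  by rewrite mulr_ge0 // !sumr_ge0 // => i _; rewrite sumr_ge0 // => j _; apply: sqr_ge0.
exists (p%:R * K); split=> [|w]; first exact: mulr_ge0.
have hi i : (M *m w) i 0 ^+ 2 <= K * dotv w w.
  rewrite mxE; apply: le_trans (sqr_sum_le _) _.
  rewrite /K -mulrA ler_wpM2l // dotv_sqr mulr_sumr; apply: ler_sum => j _.
  rewrite exprMn ler_wpM2r ?sqr_ge0 //.
  rewrite (bigD1 i) //= (bigD1 j) //= -addrA lerDl addr_ge0 ?sumr_ge0 // => *.
    exact: sqr_ge0.
  by rewrite sumr_ge0 // => *; apply: sqr_ge0.
rewrite dotv_sqr; apply: le_trans (ler_sum _ (fun i _ => hi i)) _.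
by rewrite sumr_const card_ord -[_ *+ p]mulr_natl mulrA.
Qed.

Lemma unitmx_ker0 k (G : 'M[R]_k) :
  (forall c : 'cV_k, G *m c = 0 -> c = 0) -> G \in unitmx.
Proof.
move=> ker0; rewrite unitmxE unitfE -det_tr; apply/negP => /det0P [v v_neq0 vG].
move: v_neq0; rewrite -[v]trmxK (ker0 v^T) ?trmx0 ?eqxx //.
by rewrite -[G]trmxK -trmx_mul vG trmx0.
Qed.

End Matrix.

Section Hoffman.
Variables (R : realType) (m n : nat) (A : 'M[R]_(m, n)).
Implicit Types e k u : 'cV[R]_n.

Definition supported (J : {set 'I_n}) u := forall j, j \notin J -> u j 0 = 0.

Definition kernel_trivial_on J := forall u, supported J u -> A *m u = 0 -> u = 0.

Lemma supported_lower_bound J : kernel_trivial_on J ->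
  exists c, 0 <= c /\
    forall u, supported J u -> dotv u u <= c * dotv (A *m u) (A *m u).
Proof.
move=> injJ.
pose d j : R := (j \in J)%:R.
pose E := diag_mx (\row_j d j).
have Eu u : supported J u -> E *m u = u.
  move=> hu; apply/matrixP => i k; rewrite (ord1 k) mul_diag_mx !mxE /d.
  by case: (boolP (i \in J)) => hi; rewrite ?mul1r // hu // mulr0.
pose G := E *m A^T *m A *m E + (1%:M - E).
have Gunit : G \in unitmx.
  apply: unitmx_ker0 => c Gc.
  have GcE : dotv c (G *m c)
      = dotv (A *m (E *m c)) (A *m (E *m c)) + \sum_j (1 - d j) * c j 0 ^+ 2.
    rewrite mulmxDl mulmxBl mul1mx dotvDr; congr (_ + _).
      by rewrite -!mulmxA dotv_mulmx tr_diag_mx dotv_mulmx trmxK.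
    by apply: eq_bigr => j _; rewrite mul_diag_mx !mxE; ring.
  have rest_ge0 j : 0 <= (1 - d j) * c j 0 ^+ 2.
    by rewrite mulr_ge0 ?sqr_ge0 // /d; case: (j \in J); rewrite ?subrr ?subr0.
  have [AEc0 rest0] : dotv (A *m (E *m c)) (A *m (E *m c)) = 0
                      /\ \sum_j (1 - d j) * c j 0 ^+ 2 = 0.
    have := dotv_ge0 (A *m (E *m c)).
    have : 0 <= \sum_j (1 - d j) * c j 0 ^+ 2 by apply: sumr_ge0 => j _.
    by move: GcE; rewrite Gc dotv0r; lra.
  have cJ : supported J c.
    move=> j hj; move/eqP: rest0; rewrite psumr_eq0 // => /allP /(_ j (mem_index_enum j)).
    by rewrite /d (negbTE hj) subr0 mul1r sqrf_eq0 => /eqP.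
  by apply: injJ => //; apply/eqP; rewrite -dotv_eq0 -{1 2}(Eu c cJ) AEc0.
have [K [K0 hK]] := dotv_mulmx_le (invmx G *m (E *m A^T)).
exists K; split => // u hu.
have {1 2}-> : u = invmx G *m (E *m A^T) *m (A *m u).
  have Gu : G *m u = E *m A^T *m (A *m u).
    by rewrite /G mulmxDl mulmxBl mul1mx !(Eu u hu) subrr addr0 -!mulmxA (Eu u hu).
  by rewrite -!mulmxA [E *m (A^T *m _)]mulmxA -Gu mulKmx.
exact: hK.
Qed.

Definition conformal k e := forall j, 0 <= k j 0 * e j 0 /\ (e j 0 = 0 -> k j 0 = 0).

Lemma conformal_small_step e k : conformal k e -> k != 0 ->
  exists2 t, 0 < t & (forall j, (t * k j 0) ^+ 2 <= t * k j 0 * (e j 0))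
                     /\ dotv (t *: k) (t *: k) < dotv (t *: k) e.
Proof.
move=> k_conf k_neq0.
have ke_gt0 j : k j 0 != 0 -> 0 < k j 0 * e j 0.
  move=> kj; case: (k_conf j) => ke0 e_sub; rewrite lt_def ke0 andbT mulf_neq0 //.
  by apply: contra_neq kj => /e_sub.
have [j0 kj0] : exists j, k j 0 != 0.
  apply: contrapT => k0; move/eqP: k_neq0; apply; apply/matrixP => j i.
  by rewrite (ord1 i) mxE; apply: contrapT => kj; apply: k0; exists j; apply/eqP.
pose F j := e j 0 / k j 0.
case: (arg_minP F (kj0 : [pred j | k j 0 != 0] j0)) => j1 kj1 F_min.
have F_sqr j : k j 0 != 0 -> F j * k j 0 ^+ 2 = k j 0 * e j 0.
  by move=> kj; rewrite /F; field.
have F_gt0 : 0 < F j1.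
  have k2 : 0 < k j1 0 ^+ 2 by rewrite exprn_even_gt0.
  by rewrite -(pmulr_lgt0 _ k2) F_sqr ?ke_gt0.
have F_le j : F j1 * k j 0 ^+ 2 <= k j 0 * e j 0.
  have [->|kj] := eqVneq (k j 0) 0; first by rewrite expr0n mulr0 mul0r.
  by rewrite -F_sqr // ler_wpM2r ?sqr_ge0 ?F_min.
have ke_ge0 j : 0 <= k j 0 * e j 0 by case: (k_conf j).
have t_gt0 : 0 < F j1 / 2 by rewrite divr_gt0.
exists (F j1 / 2) => //; split=> [j|].
  by have := F_le j; have := ke_ge0 j; nra.
rewrite !dotvZl dotvZr ltr_pM2l //.
have Q_le : F j1 / 2 * dotv k k <= dotv k e / 2.
  rewrite dotv_sqr mulr_sumr /dotv mulr_suml; apply: ler_sum => j _.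
  by have := F_le j; lra.
have ke_pos : 0 < dotv k e.
  rewrite /dotv (bigD1 j0) //= ltr_pwDl ?ke_gt0 //.
  by rewrite sumr_ge0 // => j _; apply: ke_ge0.
lra.
Qed.

Definition no_conformal_kernel e := forall k, A *m k = 0 -> conformal k e -> k = 0.

Definition supp e := [set j | e j 0 != 0].

Lemma supported_supp e : supported (supp e) e.
Proof. by move=> j; rewrite inE negbK => /eqP. Qed.

(* Move from [e] along [k] until the first coordinate of [e] that [k] pushes
   towards zero vanishes. *)
Lemma conformal_step e k : (exists j, k j 0 * e j 0 < 0) ->
  exists2 t, 0 < t & (forall j, 0 <= (e j 0 + t * k j 0) * e j 0) /\
    (exists j, e j 0 != 0 /\ e j 0 + t * k j 0 = 0).
Proof.
case=> j0 hj0; pose P := [pred j | k j 0 * e j 0 < 0].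
pose F j := - e j 0 / k j 0.
case: (arg_minP F (hj0 : P j0)) => j1 Pj1 F_min.
have k_neq0 j : P j -> k j 0 != 0 by rewrite inE; apply: contraTneq => ->; rewrite mul0r ltxx.
have e_neq0 j : P j -> e j 0 != 0 by rewrite inE; apply: contraTneq => ->; rewrite mulr0 ltxx.
have F_mul j : P j -> F j * (k j 0 * e j 0) = - e j 0 ^+ 2.
  by move=> /k_neq0 kj; rewrite /F; field.
have F_gt0 : 0 < F j1.
  have k2 : 0 < k j1 0 ^+ 2 by rewrite exprn_even_gt0 // k_neq0.
  rewrite -(pmulr_lgt0 _ k2) (_ : F j1 * _ = - (k j1 0 * e j1 0)); first by rewrite oppr_gt0.
  by rewrite /F; field; apply: k_neq0.
exists (F j1) => //; split; last first.
  by exists j1; split; [apply: e_neq0 | rewrite /F; field; apply: k_neq0].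
move=> j; have [kej|kej] := lerP 0 (k j 0 * e j 0).
  by have := mulr_ge0 (ltW F_gt0) kej; have := sqr_ge0 (e j 0); onra.
have : F j * (k j 0 * e j 0) <= F j1 * (k j 0 * e j 0) by rewrite ler_wnM2r ?F_min // ltW.
by rewrite F_mul //; onra.
Qed.

Lemma card_supp_lt e e' : (forall j, e j 0 = 0 -> e' j 0 = 0) ->
  (exists j, e j 0 != 0 /\ e' j 0 = 0) -> (#|supp e'| < #|supp e|)%N.
Proof.
move=> sub [j [ej e'j]]; apply: proper_card; apply/properP; split.
  by apply/fintype.subsetP => i; rewrite !inE; apply: contra => /eqP /sub ->.
by exists j; rewrite !inE ?ej // e'j eqxx.
Qed.

Lemma no_conformal_kernel_mono e e' : (forall j, 0 <= e' j 0 * e j 0) ->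
  (forall j, e j 0 = 0 -> e' j 0 = 0) -> no_conformal_kernel e -> no_conformal_kernel e'.
Proof.
move=> e'e sub nck k Ak k_conf; apply: nck => // j.
split; last by move=> /sub /(proj2 (k_conf j)).
have [e'j0|e'j_neq0] := eqVneq (e' j 0) 0; first by rewrite (proj2 (k_conf j) e'j0) mul0r.
have -> : k j 0 * e j 0 = k j 0 * e' j 0 * (e' j 0 * e j 0) / e' j 0 ^+ 2 by field.
by rewrite divr_ge0 ?sqr_ge0 // mulr_ge0 ?(proj1 (k_conf j)).
Qed.

Lemma kernel_shift e k : no_conformal_kernel e -> A *m k = 0 ->
  supported (supp e) k -> k != 0 ->
  exists2 t, 0 < t & [/\ A *m (e + t *: k) = A *m e,
    (#|supp (e + t *: k)| < #|supp e|)%N & no_conformal_kernel (e + t *: k)].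
Proof.
move=> nck Ak k_supp k_neq0.
have k_sub j : e j 0 = 0 -> k j 0 = 0 by move=> ej; apply: k_supp; rewrite inE ej eqxx.
have [j1 kej] : exists j, k j 0 * e j 0 < 0.
  apply: contrapT => no_neg; move/eqP: k_neq0; apply; apply: nck => // j.
  split; last exact: k_sub.
  by rewrite leNgt; apply/negP => kej; apply: no_neg; exists j.
have [t t_gt0 [t_conf [j0 [ej0 e'j0]]]] := conformal_step (ex_intro _ j1 kej).
have e'E j : (e + t *: k) j 0 = e j 0 + t * k j 0 by rewrite !mxE.
have e'_sub j : e j 0 = 0 -> (e + t *: k) j 0 = 0.
  by move=> ej; rewrite e'E ej k_sub // mulr0 addr0.
exists t => //; split.
- by rewrite mulmxDr -scalemxAr Ak scaler0 addr0.
- by apply: card_supp_lt => //; exists j0; rewrite e'E.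
- by apply: no_conformal_kernel_mono nck => // j; rewrite e'E.
Qed.

(* Splitting [e] along a kernel direction in both senses writes it as a convex
   combination of two vectors with the same image and smaller support; by
   convexity of the square norm one of them is at least as long as [e]. *)
Lemma conformal_split e : no_conformal_kernel e -> ~ kernel_trivial_on (supp e) ->
  exists e', [/\ A *m e' = A *m e, (#|supp e'| < #|supp e|)%N,
                 no_conformal_kernel e' & dotv e e <= dotv e' e'].
Proof.
move=> nck not_inj.
have [k [k_supp Ak k_neq0]] : exists k, [/\ supported (supp e) k, A *m k = 0 & k != 0].
  apply: contrapT => no_k; apply: not_inj => u u_supp Au.
  by apply: contrapT => u_neq0; apply: no_k; exists u; split=> //; apply/eqP.
have [t1 t1_gt0 [Ae1 lt1 nck1]] := kernel_shift nck Ak k_supp k_neq0.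
have Ank : A *m - k = 0 by rewrite mulmxN Ak oppr0.
have nk_supp : supported (supp e) (- k).
  by move=> j /k_supp; rewrite mxE => ->; rewrite oppr0.
have nk_neq0 : - k != 0 by rewrite oppr_eq0.
have [t2 t2_gt0 [Ae2 lt2 nck2]] := kernel_shift nck Ank nk_supp nk_neq0.
set e1 := e + t1 *: k; set e2 := e + t2 *: - k.
pose s := t2 / (t1 + t2).
have s01 : 0 <= s <= 1.
  by rewrite divr_ge0 ?ler_pdivrMr ?mul1r ?ltW ?addr_gt0 //= ltrDr.
have := dotv_convex e1 e2 s01.
have -> : s *: e1 + (1 - s) *: e2 = e.
  apply/matrixP => i j; rewrite !mxE /s; field.
  by rewrite gt_eqF ?addr_gt0.
case/andP: s01 => s0 s1 conv.
have [le12|le21] := lerP (dotv e1 e1) (dotv e2 e2).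
  by exists e2; split=> //; onra.
by exists e1; split=> //; onra.
Qed.

Lemma no_conformal_kernel_bound : exists C, 0 <= C /\
  forall e, no_conformal_kernel e -> dotv e e <= C * dotv (A *m e) (A *m e).
Proof.
have hc J : exists c, 0 <= c /\ (kernel_trivial_on J ->
    forall u, supported J u -> dotv u u <= c * dotv (A *m u) (A *m u)).
  case: (pselect (kernel_trivial_on J)) => [injJ|not_inj].
    by have [c [c0 hc]] := supported_lower_bound injJ; exists c.
  by exists 0; split=> // /not_inj.
have [c hcJ] := choice hc.
have c_le J : c J <= \sum_J c J.
  by rewrite (bigD1 J) //= lerDl sumr_ge0 // => K _; case: (hcJ K).
exists (\sum_J c J); split; first by rewrite sumr_ge0 // => J _; case: (hcJ J).
suff bound N e : (#|supp e| < N)%N -> no_conformal_kernel e ->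
    dotv e e <= (\sum_J c J) * dotv (A *m e) (A *m e) by move=> e; exact: bound.
elim: N e => [//|N IH] e lt_N nck.
case: (pselect (kernel_trivial_on (supp e))) => [injJ|not_inj].
  apply: le_trans (proj2 (hcJ _) injJ e (@supported_supp e)) _.
  by rewrite ler_wpM2r ?dotv_ge0 ?c_le.
have [e' [Ae' lt_e' nck' le_e']] := conformal_split nck not_inj.
by apply: le_trans le_e' _; rewrite -Ae'; apply: IH; rewrite // (leq_trans lt_e').
Qed.

End Hoffman.

Section Expectation.
Variables (R : realType) (m : nat) (p : 'I_m -> R).
Hypotheses (p_ge0 : forall i, 0 <= p i) (p_sum1 : \sum_i p i = 1).

Lemma expect0 (g : seq 'I_m -> R) : expect p 0 g = g [::].
Proof.
rewrite /expect (big_pred1 [tuple]) => [|t]; first by rewrite big_nil mul1r.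
by rewrite /= tuple0; apply/esym/eqP.
Qed.

Lemma expectS k (g : seq 'I_m -> R) :
  expect p k.+1 g = \sum_i p i * expect p k (fun s => g (i :: s)).
Proof.
rewrite /expect; under [RHS]eq_bigr => i _ do rewrite mulr_sumr.
rewrite pair_big /= (reindex (fun ts : 'I_m * k.-tuple 'I_m => cons_tuple ts.1 ts.2)) /=.
  by apply: eq_bigr => -[i s] _; rewrite big_cons mulrA.
exists (fun t => (thead t, behead_tuple t)) => [[i s] _ | t _] /=.
  by congr pair; apply: val_inj.
by rewrite [RHS]tuple_eta; apply: val_inj.
Qed.

Lemma expect_le_scale k (c : R) (g h : seq 'I_m -> R) :
  (forall s, g s <= c * h s) -> expect p k g <= c * expect p k h.
Proof.
move=> gh; rewrite /expect mulr_sumr; apply: ler_sum => s _.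
by rewrite mulrCA ler_wpM2l // prodr_ge0.
Qed.

Lemma sum_sqrt_le (v : 'I_m -> R) : (forall i, 0 <= v i) ->
  \sum_i p i * Num.sqrt (v i) <= Num.sqrt (\sum_i p i * v i).
Proof.
move=> v_ge0; set M := \sum_i p i * v i.
have M_ge0 : 0 <= M by rewrite sumr_ge0 // => i _; rewrite mulr_ge0.
have [M0|M_neq0] := eqVneq M 0.
  move/eqP: M0; rewrite psumr_eq0 => [/allP pv0|i _]; last by rewrite mulr_ge0.
  rewrite big1 ?sqrtr_ge0 // => i _; have := pv0 i (mem_index_enum i).
  by rewrite implyTb mulf_eq0 => /orP[/eqP ->|/eqP ->]; rewrite ?mul0r ?sqrtr0 ?mulr0.
have M_gt0 : 0 < M by rewrite lt_def M_neq0.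
set s := Num.sqrt M; have s_gt0 : 0 < s by rewrite sqrtr_gt0.
have s2 : s ^+ 2 = M by rewrite sqr_sqrtr.
(* AM-GM: [sqrt v <= (v + M) / (2 sqrt M)], with equality at [v = M]. *)
have amgm i : p i * Num.sqrt (v i) <= p i * (v i + M) / (2 * s).
  rewrite -mulrA ler_wpM2l // ler_pdivlMr ?mulr_gt0 //.
  by have := sqr_ge0 (Num.sqrt (v i) - s); have := sqr_sqrtr (v_ge0 i); nra.
apply: le_trans (ler_sum _ (fun i _ => amgm i)) _.
have sumE : \sum_i p i * (v i + M) = M + M.
  by under eq_bigr do rewrite mulrDr; rewrite big_split /= -mulr_suml p_sum1 mul1r.
have halfE : (M + M) / (2 * s) = s by rewrite -s2; field; rewrite gt_eqF.
by rewrite -mulr_suml sumE halfE.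
Qed.

Lemma expect_sqrt_contraction (X : Type) (st : X -> 'I_m -> X) (I : X -> Prop)
    (V : X -> R) (q : R) :
  0 <= q -> (forall x, I x -> 0 <= V x) -> (forall x i, I x -> I (st x i)) ->
  (forall x, I x -> \sum_i p i * V (st x i) <= q * V x) ->
  forall k x, I x ->
  expect p k (fun s => Num.sqrt (V (foldl st x s))) <= Num.sqrt q ^+ k * Num.sqrt (V x).
Proof.
move=> q_ge0 V_ge0 I_st contraction; elim=> [|k IH] x Ix.
  by rewrite expect0 expr0 mul1r.
rewrite expectS; apply: le_trans
  (ler_sum _ (fun i _ => ler_wpM2l (p_ge0 i) (IH _ (I_st x i Ix)))) _.
under eq_bigr do rewrite mulrCA.
rewrite -mulr_sumr exprSr -mulrA ler_wpM2l ?exprn_ge0 ?sqrtr_ge0 //.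
apply: le_trans (sum_sqrt_le (fun i => V_ge0 _ (I_st x i Ix))) _.
by rewrite -sqrtrM // ler_sqrt ?mulr_ge0 ?V_ge0 ?contraction.
Qed.

End Expectation.

Lemma uniform_pos_lower_bound (R : realType) (I : finType) (g : I -> R) :
  (forall i, 0 < g i) -> exists2 d, 0 < d & forall i, d <= g i.
Proof.
move=> g_gt0; have gV_ge0 i : 0 <= (g i)^-1 by rewrite invr_ge0 ltW.
have S_ge0 : 0 <= \sum_i (g i)^-1 by apply: sumr_ge0.
exists (1 + \sum_i (g i)^-1)^-1 => [|i]; first by rewrite invr_gt0; lra.
rewrite -[g i]invrK lef_pV2 ?posrE ?invr_gt0 //; last by lra.
by rewrite (bigD1 i) //= addrCA lerDl addr_ge0 ?sumr_ge0.
Qed.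

Section Kaczmarz.
Variables (R : realType) (m n : nat) (A : 'M[R]_(m, n)) (b : 'cV[R]_m).
Variables (lam : R) (xh : 'cV[R]_n).
Hypotheses (lam_gt0 : 0 < lam) (A_xh : A *m xh = b)
  (xh_opt : forall x, A *m x = b -> fobj lam xh <= fobj lam x).
Implicit Types z : 'cV[R]_n.

Definition orth_kernel z := forall k, A *m k = 0 -> dotv z k = 0.

Lemma dotv_arow i x : dotv (arow A i) x = (A *m x) i 0.
Proof. by rewrite mxE; apply: eq_bigr => j _; rewrite !mxE. Qed.

Lemma orth_kernel0 : orth_kernel 0.
Proof. by move=> k _; rewrite dotvC dotv0r. Qed.

Lemma orth_kernel_step z i t : orth_kernel z -> orth_kernel (z - t *: arow A i).
Proof. by move=> zk k Ak; rewrite dotvBl dotvZl zk // dotv_arow Ak mxE mulr0 subrr. Qed.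

Lemma arow_dotv_gt0 i : row i A != 0 -> 0 < dotv (arow A i) (arow A i).
Proof.
move=> Ai; rewrite lt_def dotv_ge0 andbT dotv_eq0; apply: contraNneq Ai.
by rewrite /arow => Ai0; rewrite -[row i A]trmxK Ai0 trmx0.
Qed.

(* Optimality of [xh] forbids kernel directions conformal to [x - xh]
   when [x = soft lam z] with [z] orthogonal to the kernel: moving [xh] and
   [x] towards each other along such a direction would decrease [f] at one
   of them. *)
Lemma soft_err_no_conformal_kernel z :
  orth_kernel z -> no_conformal_kernel A (soft lam z - xh).
Proof.
move=> zk k Ak k_conf; apply/eqP; apply: contraT => k_neq0.
have [t t_gt0 [step_le step_lt]] := conformal_small_step k_conf k_neq0.
have Atk : A *m (t *: k) = 0 by rewrite -scalemxAr Ak scaler0.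
have opt_xh : fobj lam xh <= fobj lam (xh + t *: k).
  by apply: xh_opt; rewrite mulmxDr Atk addr0.
have opt_soft : fobj lam (soft lam z) <= fobj lam (soft lam z - t *: k).
  have zu : dotv z (soft lam z - t *: k) = dotv z (soft lam z).
    by rewrite dotvBr (zk _ Atk) subr0.
  have := fobj_soft_min lam_gt0 (soft lam z - t *: k) z.
  by rewrite zu; have := dotv_ge0 (soft lam z - (soft lam z - t *: k)); lra.
have e_entry j : (soft lam z - xh) j 0 = soft lam z j 0 - xh j 0 by rewrite !mxE.
have d_entry j : (t *: k) j 0 = t * k j 0 by rewrite mxE.
have conf_step j : 0 <= (t *: k) j 0 * (soft lam z j 0 - xh j 0).
  by rewrite d_entry -e_entry -mulrA (mulr_ge0 (ltW t_gt0) (proj1 (k_conf j))).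
have short_step j : (t *: k) j 0 ^+ 2 <= (t *: k) j 0 * (soft lam z j 0 - xh j 0).
  by rewrite d_entry -e_entry; apply: step_le.
by have := fobj_exchange_le lam_gt0 conf_step short_step; lra.
Qed.

Definition residual z i := dotv (arow A i) (soft lam z) - b i 0.

Lemma bregman_error_bound : exists g, 0 <= g /\ forall z, orth_kernel z ->
  bregman lam xh z <= g * \sum_i residual z i ^+ 2.
Proof.
have [C [C0 hC]] := no_conformal_kernel_bound A.
set C1 := 2^-1 + \sum_j 2 * lam / `|xh j 0|.
have C1_ge0 : 0 <= C1.
  by rewrite addr_ge0 ?invr_ge0 ?sumr_ge0 // => j _; rewrite divr_ge0 ?mulr_ge0 // ltW.
exists (C1 * C); split=> [|z zk]; first exact: mulr_ge0.
apply: le_trans (bregman_le lam_gt0 xh z) _; rewrite -mulrA ler_wpM2l //.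
have -> : \sum_i residual z i ^+ 2 = dotv (A *m (soft lam z - xh)) (A *m (soft lam z - xh)).
  by rewrite dotv_sqr; apply: eq_bigr => i _; rewrite /residual dotv_arow mulmxBr A_xh !mxE.
exact/hC/soft_err_no_conformal_kernel.
Qed.

Definition rsk_step z i :=
  z - (residual z i / dotv (arow A i) (arow A i)) *: arow A i.

Lemma bregman_rsk_step z i : row i A != 0 ->
  bregman lam xh (rsk_step z i)
    <= bregman lam xh z - residual z i ^+ 2 / (2 * dotv (arow A i) (arow A i)).
Proof.
move=> Ai; have na_gt0 := arow_dotv_gt0 Ai.
set a := arow A i; set na := dotv a a; set r := residual z i.
have := bregmanD_le lam_gt0 xh z (- ((r / na) *: a)).
have -> : dotv (soft lam z - xh) (- ((r / na) *: a)) = - (r ^+ 2 / na).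
  rewrite dotvNr dotvZr dotvC dotvBr [dotv a xh]dotv_arow A_xh -/(residual z i) -/r.
  by field; rewrite gt_eqF.
have -> : dotv (- ((r / na) *: a)) (- ((r / na) *: a)) = r ^+ 2 / na.
  by rewrite dotvNr dotvNl opprK dotvZr dotvZl -/na; field; rewrite gt_eqF.
have -> : r ^+ 2 / (2 * na) = r ^+ 2 / na / 2 by field; rewrite gt_eqF.
by lra.
Qed.

(* Since [bregman xh] is [f^*] plus an affine function, the line search of
   ERSK minimises the Bregman distance along the line. *)
Lemma bregman_exact_step_le z i (t t' : R) :
  fconj lam (z - t *: arow A i) + t * b i 0
    <= fconj lam (z - t' *: arow A i) + t' * b i 0 ->
  bregman lam xh (z - t *: arow A i) <= bregman lam xh (z - t' *: arow A i).
Proof.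
by rewrite !bregman_fconj // !dotvBl !dotvZl dotvC dotv_arow A_xh; lra.
Qed.

Variable p : 'I_m -> R.
Hypotheses (rows_neq0 : forall i, row i A != 0) (p_gt0 : forall i, 0 < p i)
  (p_sum1 : \sum_i p i = 1).

Lemma expected_bregman_contraction : exists2 q, 0 < q < 1 &
  forall z (z' : 'I_m -> 'cV[R]_n), orth_kernel z ->
  (forall i, bregman lam xh (z' i) <= bregman lam xh (rsk_step z i)) ->
  \sum_i p i * bregman lam xh (z' i) <= q * bregman lam xh z.
Proof.
have [g0 [g0_ge0 error_bound]] := bregman_error_bound.
have [mu mu_gt0 mu_le] :
    exists2 mu, 0 < mu & forall i, mu <= p i / dotv (arow A i) (arow A i).
  by apply: uniform_pos_lower_bound => i; rewrite divr_gt0 ?arow_dotv_gt0.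
set g := g0 + mu; have g_gt0 : 0 < g by rewrite ltr_wpDl.
exists (1 - mu / (2 * g)).
  have : mu / (2 * g) <= 2^-1.
    by rewrite ler_pdivrMr ?mulr_gt0 // mulrA mulVf ?mul1r ?pnatr_eq0 // lerDr.
  have : 0 < mu / (2 * g) by rewrite divr_gt0 ?mulr_gt0.
  move=> *; apply/andP; split; lra.
move=> z z' zk le_rsk; set V := bregman lam xh z.
have V_le : V <= g * \sum_i residual z i ^+ 2.
  apply: le_trans (error_bound z zk) _.
  by rewrite ler_wpM2r ?sumr_ge0 ?lerDl ?ltW // => i _; apply: sqr_ge0.
have step i : p i * bregman lam xh (z' i) <= p i * V - mu / 2 * residual z i ^+ 2.
  have a_gt0 := arow_dotv_gt0 (rows_neq0 i).
  have descent := le_trans (le_rsk i) (bregman_rsk_step z (rows_neq0 i)).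
  apply: le_trans (ler_wpM2l (ltW (p_gt0 i)) descent) _.
  rewrite mulrBr lerD2l lerN2.
  have -> : p i * (residual z i ^+ 2 / (2 * dotv (arow A i) (arow A i)))
      = p i / dotv (arow A i) (arow A i) / 2 * residual z i ^+ 2.
    by field; rewrite gt_eqF.
  apply: ler_wpM2r; first exact: sqr_ge0.
  by apply: ler_wpM2r (mu_le i); rewrite invr_ge0.
apply: le_trans (ler_sum _ (fun i _ => step i)) _.
rewrite sumrB -mulr_suml p_sum1 mul1r -mulr_sumr mulrBl mul1r lerD2l lerN2.
rewrite (_ : mu / (2 * g) * V = mu / 2 * (V / g)); last by field; rewrite gt_eqF.
apply: ler_wpM2l; first by rewrite divr_ge0 // ltW.
by rewrite ler_pdivrMr // mulrC.
Qed.

Lemma sparse_kaczmarz_linear_rate (X : Type) (st : X -> 'I_m -> X)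
    (dual : X -> 'cV[R]_n) (x0 : X) :
  dual x0 = 0 ->
  (forall x i, exists t, dual (st x i) = dual x - t *: arow A i) ->
  (forall x i, bregman lam xh (dual (st x i)) <= bregman lam xh (rsk_step (dual x) i)) ->
  exists q : R, 0 < q < 1 /\ exists c : R, 0 < c /\ forall k,
    expect p k (fun s => norm2 (soft lam (dual (foldl st x0 s)) - xh))
      <= c * Num.sqrt q ^+ k.
Proof.
move=> dual_x0 dual_st le_rsk.
have [q q01 contraction] := expected_bregman_contraction.
have p_ge0 i : 0 <= p i by apply: ltW.
have orth_st x i : orth_kernel (dual x) -> orth_kernel (dual (st x i)).
  by have [t ->] := dual_st x i; apply: orth_kernel_step.
have sqrt_rate := expect_sqrt_contraction p_ge0 p_sum1
  (I := fun x => orth_kernel (dual x)) (V := fun x => bregman lam xh (dual x))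
  (ltW (proj1 (andP q01))) (fun x _ => bregman_ge0 lam_gt0 _ _) orth_st
  (fun x ox => contraction _ _ ox (le_rsk x)).
set D0 := Num.sqrt (bregman lam xh 0).
have sqrt2_ge0 : 0 <= Num.sqrt (2 : R) by apply: sqrtr_ge0.
have D0_ge0 : 0 <= D0 by apply: sqrtr_ge0.
exists q; split=> //; exists (Num.sqrt 2 * D0 + 1); split=> [|k].
  by rewrite ltr_pwDr ?mulr_ge0.
apply: le_trans (expect_le_scale p_ge0 _ (fun s => norm2_le_bregman lam_gt0 xh _)) _.
have orth_x0 : orth_kernel (dual x0) by rewrite dual_x0; apply: orth_kernel0.
apply: le_trans (ler_wpM2l sqrt2_ge0 (sqrt_rate k x0 orth_x0)) _.
have sq_ge0 : 0 <= Num.sqrt q ^+ k by rewrite exprn_ge0 ?sqrtr_ge0.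
by rewrite dual_x0 -/D0; lra.
Qed.

End Kaczmarz.

Unset Implicit Arguments.

Theorem corollary5p1 (R : realType) (m n : nat) (A : 'M[R]_(m, n))
    (b : 'cV[R]_m) (lam : R) (xhat : 'cV[R]_n) (p : 'I_m -> R) :
  (forall i : 'I_m, row i A != 0) ->
  (exists x : 'cV[R]_n, A *m x = b) ->
  0 < lam ->
  A *m xhat = b ->
  (forall x : 'cV[R]_n, A *m x = b -> fobj lam xhat <= fobj lam x) ->
  (forall i, 0 < p i) ->
  \sum_(i < m) p i = 1 ->
  (exists q : R, 0 < q < 1 /\ exists c : R, 0 < c /\
     forall k : nat,
       expect p k (fun s => norm2 (rsk_iter lam A b s - xhat))
         <= c * Num.sqrt q ^+ k)
  /\
  (forall T : nat -> 'cV[R]_n -> 'I_m -> R, ersk_rule_ok lam A b T ->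
     exists q : R, 0 < q < 1 /\ exists c : R, 0 < c /\
     forall k : nat,
       expect p k (fun s => norm2 (ersk_iter lam A T s - xhat))
         <= c * Num.sqrt q ^+ k).
Proof.
move=> rows_neq0 _ lam_gt0 A_xh xh_opt p_gt0 p_sum1.
have rate := sparse_kaczmarz_linear_rate lam_gt0 A_xh xh_opt rows_neq0 p_gt0 p_sum1.
split=> [|T T_exact].
  by apply: (rate _ (rsk_step A b lam) id) => // z i; eexists.
apply: (rate _ _ snd (0%N, 0)) => // -[k z] i /=; first by eexists.
exact/bregman_exact_step_le/T_exact.
Qed.
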